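(* If a collective choice problem $\mathcal C$ is a Distribution Problem, then it is $\mathcal D$-Manipulable for every veto-proof voting rule $\mathcal D$.
   Context: Collective choice problem $\mathcal C=(X,\{\succsim_i\}_{i\in N\cup\{A\}})$: voters $N=\{1,\dots,n\}$ and an agenda setter $A$, a compact metrizable policy space $X$, and continuous preferences $\succsim_i$ represented by continuous utilities $u_i$. $X_A^*=\arg\max_X u_A$. $\mathcal C$ is a Distribution Problem if for every $x\in X$ and every player $i\in N\cup\{A\}$: (Scarcity) if $u_i(x)<\max_{z\in X}u_i(z)$ then either some player $j\ne i$ has $u_j(x)>\min_{z\in X}u_j(z)$ or some policy $y$ has $u_k(y)>u_k(x)$ for all players $k$; (Transferability) if $u_i(x)>\min_{z\in X}u_i(z)$ then some policy $y$ has $u_j(y)>u_j(x)$ for all players $j\ne i$. A voting rule is a collection $\mathcal D\subseteq 2^N$ of winning coalitions; it is veto-proof if for every voter $i$ some $D\in\mathcal D$ satisfies $D\subseteq N\setminus\{i\}$. $\mathcal C$ is $\mathcal D$-Manipulable if for every $x\notin X_A^*$ there exist a policy $y$ and $D\in\mathcal D$ with $y\succ_A x$ and $y\succ_i x$ for every $i\in D$. *)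

From HB Require Import structures.
From mathcomp Require Import all_boot all_order all_algebra.
From mathcomp Require Import all_classical all_reals topology normedtype.
Set Implicit Arguments. Unset Strict Implicit. Unset Printing Implicit Defensive.
Import Order.TTheory GRing.Theory Num.Theory numFieldNormedType.Exports.
Local Open Scope classical_set_scope.
Local Open Scope ring_scope.

(* Players: voters are [Some i] for [i : 'I_n] (i.e. N = {1,..,n}),
   the agenda setter A is [None]. *)
Notation player n := (option 'I_n).
Notation agenda := (@None _).

(* maximum / minimum value of a utility over X (attained when X is compact,
   nonempty and u continuous) *)
Definition umax {R : realType} {X : Type} (u : X -> R) : R := sup (range u).
Definition umin {R : realType} {X : Type} (u : X -> R) : R := inf (range u).

Definition argmaxA {R : realType} {X : Type} {n : nat}
  (u : player n -> X -> R) : set X :=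
  [set x | forall z, u agenda z <= u agenda x].

Definition scarcity {R : realType} {X : Type} {n : nat}
  (u : player n -> X -> R) : Prop :=
  forall (x : X) (i : player n), u i x < umax (u i) ->
    (exists j, j != i /\ umin (u j) < u j x) \/
    (exists y, forall k, u k x < u k y).

Definition transferability {R : realType} {X : Type} {n : nat}
  (u : player n -> X -> R) : Prop :=
  forall (x : X) (i : player n), umin (u i) < u i x ->
    exists y, forall j, j != i -> u j x < u j y.

Definition distribution_problem {R : realType} {X : Type} {n : nat}
  (u : player n -> X -> R) : Prop :=
  scarcity u /\ transferability u.

(* a voting rule is a family of winning coalitions D ⊆ 2^N *)
Definition veto_proof {n : nat} (D : {set {set 'I_n}}) : Prop :=
  forall i : 'I_n, exists2 C, C \in D & C \subset [set~ i].

Definition manipulable {R : realType} {X : Type} {n : nat}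
  (u : player n -> X -> R) (D : {set {set 'I_n}}) : Prop :=
  forall x : X, ~ argmaxA u x ->
    exists y : X, exists2 C, C \in D &
      u agenda x < u agenda y /\ (forall i : 'I_n, i \in C -> u (Some i) x < u (Some i) y).

From HB Require Import structures.
From mathcomp Require Import all_boot all_order all_algebra.
From mathcomp Require Import all_classical all_reals topology normedtype.
Import Order.TTheory GRing.Theory Num.Theory numFieldNormedType.Exports.
Set Implicit Arguments. Unset Strict Implicit.
Local Open Scope classical_set_scope.
Local Open Scope ring_scope.

(* If x is not optimal for the agenda setter A, then u_A x < max u_A, so
   Scarcity applied to A leaves two cases.  Either some voter i is above her
   minimum at x: Transferability then yields y that every player other than i
   strictly prefers, and veto-proofness supplies a winning coalition not
   containing i.  Or some y is a strict Pareto improvement on x, which any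
   winning coalition approves (one exists since N is nonempty).
   Compactness and continuity only serve to bound u_A, so that umax u_A is a
   genuine supremum. *)

Lemma compact_continuous_has_ubound (R : realType) (T : topologicalType)
    (f : T -> R) :
  compact [set: T] -> continuous f -> has_ubound (range f).
Proof.
move=> cT cf; have : compact (f @` setT).
  by apply: continuous_compact => //; exact: continuous_subspaceT.
move=> /(@compact_bounded R R^o) [M [Mreal fM]].
apply: (@bounded_fun_has_ubound T R f); exists M; split => // r Mr.
by move=> x _; apply: (fM r Mr); exists x.
Qed.

Lemma lt_umax (R : realType) (X : Type) (f : X -> R) (x z : X) :
  has_ubound (range f) -> f x < f z -> f x < umax f.
Proof.
move=> ub_f /lt_le_trans; apply.
by apply: ub_le_sup => //; exists z.
Qed.

Definition manipulable_at (R : realType) (X : Type) (n : nat)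
    (u : player n -> X -> R) (D : {set {set 'I_n}}) (x : X) : Prop :=
  exists y : X, exists2 C, C \in D &
    u agenda x < u agenda y /\ (forall i : 'I_n, i \in C -> u (Some i) x < u (Some i) y).

Section Manipulation.
Variables (R : realType) (X : Type) (n : nat).
Variables (u : player n -> X -> R) (D : {set {set 'I_n}}).
Hypothesis vetoD : veto_proof D.

Lemma not_argmaxA_improvable (x : X) :
  ~ argmaxA u x -> exists z, u agenda x < u agenda z.
Proof.
move=> xNmax; apply: contra_notP xNmax => noz z.
by rewrite leNgt; apply/negP => xz; apply: noz; exists z.
Qed.

Lemma manipulable_at_transfer (i : 'I_n) (x : X) :
  (exists y, forall j, j != Some i -> u j x < u j y) -> manipulable_at u D x.
Proof.
move=> [y xy]; have [C CD sub_Ci] := vetoD i.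
exists y, C => //; split=> [|k kC]; apply: xy => //.
apply: contraTneq kC => -[->]; apply/negP => iC.
(* [[set~ i]] in [veto_proof] is a classical set: membership unfolds to [i <> i]. *)
by have := fintype.subsetP sub_Ci i iC; rewrite inE; apply.
Qed.

Lemma manipulable_at_pareto (x : X) :
  (0 < n)%N -> (exists y, forall k, u k x < u k y) -> manipulable_at u D x.
Proof.
move=> n_gt0 [y xy]; have [C CD _] := vetoD (Ordinal n_gt0).
by exists y, C => //; split=> [|k _]; apply: xy.
Qed.

End Manipulation.

Theorem theorem5 (R : realType) (X : pseudoMetricType R) (n : nat)
  (u : option 'I_n -> X -> R) :
  (0 < n)%N ->
  hausdorff_space X ->
  compact [set: X] ->
  (forall i, continuous (u i)) ->
  distribution_problem u ->
  forall D : {set {set 'I_n}}, veto_proof D -> manipulable u D.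
Proof.
move=> n_gt0 _ cX cu [scarce transfer] D vetoD x xNmax.
have [z xz] := not_argmaxA_improvable xNmax.
have x_lt_max : u agenda x < umax (u agenda).
  exact: lt_umax (compact_continuous_has_ubound cX (cu agenda)) xz.
have [[[i|] [iNA ix]] | pareto] := scarce x agenda x_lt_max.
- exact: (manipulable_at_transfer (X := X) vetoD (transfer x (Some i) ix)).
- by rewrite eqxx in iNA.
- exact: (manipulable_at_pareto (X := X) vetoD n_gt0 pareto).
Qed.
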